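(* Let $q\equiv0\pmod3$ and $\mu\in\mathbb F_q^*\setminus\{1\}$. Then $\widetilde N_1(\mu)=\#\left\{c\in\mathbb F_q^*:\ \mu c^4+c^2+1\ne0,\ \eta\!\left(\dfrac{c^4}{\mu c^4+c^2+1}\right)=-1\right\}.$
   Context: $\eta$ is the quadratic character of $\mathbb F_q$: $\eta(a)=1$ if $a$ is a nonzero square, $\eta(a)=-1$ if $a$ is a non-square, $\eta(0)=0$. $\widetilde N_1(\mu)$ is the number of $c\in\mathbb F_q^*$ such that $t^3+ct^2-t-\mu c=0$ has exactly one solution $t\in\mathbb F_q$. *)

From HB Require Import structures.
From mathcomp Require Import all_boot all_order all_algebra all_field.
Set Implicit Arguments. Unset Strict Implicit. Unset Printing Implicit Defensive.
Import GRing.Theory.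
Local Open Scope ring_scope.

Definition quad_char (F : finFieldType) (a : F) : int :=
  if a == 0 then (0 : int)
  else if [exists b : F, b ^+ 2 == a] then (1 : int) else (-1 : int).

Definition Ntilde1 (F : finFieldType) (mu : F) : nat :=
  #|[set c : F | (c != 0) &&
      (#|[set t : F | t ^+ 3 + c * t ^+ 2 - t - mu * c == 0]| == 1%N)]|.

From HB Require Import structures.
From mathcomp Require Import all_boot all_order all_algebra all_field.
From mathcomp Require Import ring.
Import GRing.Theory.
Local Open Scope ring_scope.

(* In characteristic 3 cubing is additive. Multiplying t^3 + c t^2 - t - mu c
   by c^3 and substituting u = c t + 1 gives u^3 + c^2 u^2 = D, where
   D = mu c^4 + c^2 + 1. If D = 0 its roots are 0 and -c^2. Otherwise 0 is not
   a root and w = c / u gives w^3 - k w = c^3 / D with k = c^4 / D. Since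
   w |-> w^3 - k w is additive, its fibres are empty or cosets of its kernel
   {0} U {w | w^2 = k}, so there is exactly one root iff k is a non-square. *)

Lemma finField_pchar_dvd_card (F : finFieldType) (p : nat) :
  prime p -> (p %| #|F|)%N -> p \in [pchar F].
Proof.
move=> p_pr; have [q q_pr q_char] := finPcharP F.
rewrite (card_pprimeChar q_char) Euclid_dvdX // dvdn_prime2 //.
by case/andP=> /eqP ->.
Qed.

Lemma quad_char_eqN1 (F : finFieldType) (a : F) :
  (quad_char a == -1) = (a != 0) && ~~ [exists b, b ^+ 2 == a].
Proof. by rewrite /quad_char; case: (a == 0); case: [exists b, b ^+ 2 == a]. Qed.

Section AdditiveFibers.

Variables (V : finZmodType) (f : V -> V).
Hypothesis f_sub : {morph f : x y / x - y}.

Lemma card_fiber_additive_eq1 (y : V) :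
  (#|[set x | f x == y]| == 1%N) = [forall x, (f x == 0) ==> (x == 0)].
Proof.
apply/idP/forallP => [/cards1P[x0 fiber_x0] x|ker0].
  apply/implyP => /eqP fx0.
  have : x0 \in [set x | f x == y] by rewrite fiber_x0 set11.
  rewrite inE => /eqP fx0y.
  have : x0 - x \in [set x | f x == y] by rewrite inE f_sub fx0 subr0 fx0y.
  by rewrite fiber_x0 inE -subr_eq0 addrAC subrr add0r oppr_eq0.
have f_inj : injective f.
  move=> x1 x2 /eqP; rewrite -subr_eq0 -f_sub => /eqP fx0.
  by apply/eqP; rewrite -subr_eq0; apply: (implyP (ker0 _)); apply/eqP.
apply/eqP; rewrite -(cards1 y) -[RHS](card_preimset _ f_inj).
by apply: eq_card => x; rewrite !inE.
Qed.

End AdditiveFibers.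

Section CharThree.

Variable F : finFieldType.
Hypothesis F_pchar3 : 3 \in [pchar F].

Lemma card_depressed_cubic_roots_eq1 (k B : F) : k != 0 ->
  (#|[set w | w ^+ 3 - k * w == B]| == 1%N) = ~~ [exists b, b ^+ 2 == k].
Proof.
move=> k_neq0; rewrite card_fiber_additive_eq1 => [|x y]; last first.
  by rewrite -!(pFrobenius_autE F_pchar3) (rmorphB (pFrobenius_aut F_pchar3)); ring.
rewrite negb_exists; apply: eq_forallb => w.
have [-> | w_neq0] := eqVneq w 0; first by rewrite implybT expr0n eq_sym k_neq0.
rewrite implybF (_ : w ^+ 3 - k * w = w * (w ^+ 2 - k)); last by ring.
by rewrite mulf_eq0 (negbTE w_neq0) subr_eq0.
Qed.

Variables (mu c : F).
Hypothesis c_neq0 : c != 0.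
Local Notation D := (mu * c ^+ 4 + c ^+ 2 + 1).

Lemma scaled_cubic_shift t :
  c ^+ 3 * (t ^+ 3 + c * t ^+ 2 - t - mu * c) =
  (c * t + 1) ^+ 3 + c ^+ 2 * (c * t + 1) ^+ 2 - D.
Proof.
transitivity ((c * t + 1) ^+ 3 + c ^+ 2 * (c * t + 1) ^+ 2 - D
               - 3%:R * (c ^+ 3 * t + c ^+ 2 * t ^+ 2 + c * t)); first ring.
by rewrite (pcharf0 F_pchar3) mul0r subr0.
Qed.

Lemma card_roots_shift :
  #|[set t | t ^+ 3 + c * t ^+ 2 - t - mu * c == 0]| =
  #|[set u | u ^+ 3 + c ^+ 2 * u ^+ 2 == D]|.
Proof.
have shift_inj : injective (fun t => c * t + 1) by move=> t1 t2 /addIr/(mulfI c_neq0).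
rewrite -[RHS](card_preimset _ shift_inj); apply: eq_card => t; rewrite !inE.
by rewrite -[RHS]subr_eq0 -scaled_cubic_shift mulf_eq0 expf_eq0 (negbTE c_neq0).
Qed.

Lemma card_roots_shift_degenerate : D = 0 ->
  #|[set u | u ^+ 3 + c ^+ 2 * u ^+ 2 == D]| = 2.
Proof.
move=> ->; have c2_neq0 : c ^+ 2 != 0 by rewrite expf_neq0.
have -> : [set u | u ^+ 3 + c ^+ 2 * u ^+ 2 == 0] = [set 0; - c ^+ 2].
  apply/setP => u; rewrite !inE.
  have -> : u ^+ 3 + c ^+ 2 * u ^+ 2 = u ^+ 2 * (u + c ^+ 2) by ring.
  by rewrite mulf_eq0 expf_eq0 /= addr_eq0.
by rewrite cards2 eq_sym oppr_eq0 c2_neq0.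
Qed.

Lemma card_roots_shift_invert : D != 0 ->
  #|[set u | u ^+ 3 + c ^+ 2 * u ^+ 2 == D]| =
  #|[set w | w ^+ 3 - c ^+ 4 / D * w == c ^+ 3 / D]|.
Proof.
move=> D_neq0.
have inv_inj : injective (fun w => c / w) by move=> w1 w2 /(mulfI c_neq0)/invr_inj.
rewrite -[LHS](card_preimset _ inv_inj); apply: eq_card => w; rewrite !inE.
have [-> | w_neq0] := eqVneq w 0.
  rewrite invr0 !mulr0 !expr0n /= mulr0 addr0 subr0 eq_sym (negbTE D_neq0) eq_sym.
  by rewrite mulf_eq0 invr_eq0 expf_eq0 (negbTE c_neq0) (negbTE D_neq0).
rewrite -subr_eq0 -[RHS]subr_eq0.
have -> : (c / w) ^+ 3 + c ^+ 2 * (c / w) ^+ 2 - D =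
          - (D / w ^+ 3) * (w ^+ 3 - c ^+ 4 / D * w - c ^+ 3 / D).
  by field; rewrite D_neq0 w_neq0.
by rewrite mulf_eq0 oppr_eq0 mulf_eq0 invr_eq0 expf_eq0 (negbTE D_neq0) (negbTE w_neq0).
Qed.

End CharThree.

Theorem lemma8p3 (F : finFieldType) (mu : F) :
  (3 %| #|F|)%N -> mu != 0 -> mu != 1 ->
  Ntilde1 mu =
  #|[set c : F | [&& c != 0,
                    mu * c ^+ 4 + c ^+ 2 + 1 != 0 &
                    quad_char (c ^+ 4 / (mu * c ^+ 4 + c ^+ 2 + 1)) == -1]]|.
Proof.
move=> /(@finField_pchar_dvd_card F 3 isT) F_pchar3 _ _.
apply: eq_card => c; rewrite !inE.
have [-> // | c_neq0] := eqVneq c 0.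
rewrite /= card_roots_shift //.
have [D_eq0 | D_neq0] := eqVneq (mu * c ^+ 4 + c ^+ 2 + 1) 0.
  by rewrite card_roots_shift_degenerate.
have k_neq0 : c ^+ 4 / (mu * c ^+ 4 + c ^+ 2 + 1) != 0.
  by rewrite mulf_neq0 ?invr_eq0 ?expf_neq0.
rewrite card_roots_shift_invert // card_depressed_cubic_roots_eq1 //.
by rewrite quad_char_eqN1 k_neq0.
Qed.
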